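(* Let $\omega>0$, $T=2\pi/\omega$, and let $H(t)=\begin{pmatrix} a(t) & b(t)\\ b^*(t) & c(t)\end{pmatrix}$ be a continuous $T$-periodic family of $2\times 2$ Hermitian matrices (so $a,c$ real-valued) such that $[H(t),G(t)]=0$ for all $t$, where $G(t)=\begin{pmatrix}0 & e^{-i\omega t}\\ 1 & 0\end{pmatrix}$. Then $a(t)=c(t)$ and $b(t)=b^*(t)e^{-i\omega t}$ for all $t$, and there exists $t$ with $b(t)=0$; in particular the two instantaneous eigenvalues of $H(t)$ coincide at some time $t$ (the spectrum is gapless). *)

From Stdlib Require Import Reals.
From Coquelicot Require Import Coquelicot.
Open Scope R_scope.

Record M2 := mkM2 { m11 : C; m12 : C; m21 : C; m22 : C }.

Definition M2mul (A B : M2) : M2 :=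
  mkM2 (Cplus (Cmult (m11 A) (m11 B)) (Cmult (m12 A) (m21 B)))
       (Cplus (Cmult (m11 A) (m12 B)) (Cmult (m12 A) (m22 B)))
       (Cplus (Cmult (m21 A) (m11 B)) (Cmult (m22 A) (m21 B)))
       (Cplus (Cmult (m21 A) (m12 B)) (Cmult (m22 A) (m22 B))).

Definition M2comm (A B : M2) : M2 :=
  let P := M2mul A B in let Q := M2mul B A in
  mkM2 (Cminus (m11 P) (m11 Q)) (Cminus (m12 P) (m12 Q))
       (Cminus (m21 P) (m21 Q)) (Cminus (m22 P) (m22 Q)).

Definition M2zero : M2 := mkM2 (RtoC 0) (RtoC 0) (RtoC 0) (RtoC 0).

Definition M2det (A : M2) : C :=
  Cminus (Cmult (m11 A) (m22 A)) (Cmult (m12 A) (m21 A)).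

Definition M2shift (A : M2) (mu : C) : M2 :=
  mkM2 (Cminus (m11 A) mu) (m12 A) (m21 A) (Cminus (m22 A) mu).

Definition Cexpi (theta : R) : C := (cos theta, sin theta).

Definition Hmat (a c : R -> R) (b : R -> C) (t : R) : M2 :=
  mkM2 (RtoC (a t)) (b t) (Cconj (b t)) (RtoC (c t)).

Definition Gmat (omega t : R) : M2 :=
  mkM2 (RtoC 0) (Cexpi (- (omega * t))) (RtoC 1) (RtoC 0).

(* the two eigenvalues of A coincide: the characteristic polynomial
   det(A - mu I) is (lambda - mu)^2 for some lambda *)
Definition degenerate_spectrum (A : M2) : Prop :=
  exists lam : C, forall mu : C,
    M2det (M2shift A mu) = Cmult (Cminus lam mu) (Cminus lam mu).

From Stdlib Require Import Reals Lra.
From Coquelicot Require Import Coquelicot.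
Open Scope R_scope.

(* Only two entries of the commutator matter: they give a = c and
   b = b^* e^{-i omega t}.  The latter says that beta(t) := b(t) e^{i omega t/2}
   is real.  Since e^{i omega (t+T)/2} = - e^{i omega t/2} and b is T-periodic,
   the continuous real function beta is T-antiperiodic, so it vanishes somewhere
   by the intermediate value theorem; there b = 0 and H is scalar. *)

Lemma Cexpi_add (x y : R) : Cexpi (x + y) = (Cexpi x * Cexpi y)%C.
Proof.
  unfold Cexpi, Cmult; simpl. rewrite cos_plus, sin_plus. f_equal; ring.
Qed.

Lemma Cexpi_add_PI (x : R) : Cexpi (x + PI) = (- Cexpi x)%C.
Proof.
  unfold Cexpi, Copp; simpl. rewrite neg_cos, neg_sin. reflexivity.
Qed.

Lemma Cexpi_opp_r (x : R) : (Cexpi x * Cexpi (- x))%C = 1%C.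
Proof.
  rewrite <- Cexpi_add, Rplus_opp_r. unfold Cexpi. rewrite cos_0, sin_0. reflexivity.
Qed.

Lemma Cconj_Cexpi (x : R) : Cconj (Cexpi x) = Cexpi (- x).
Proof.
  unfold Cexpi, Cconj; simpl. rewrite cos_neg, sin_neg. reflexivity.
Qed.

Lemma Cconj_0 : Cconj 0 = 0%C.
Proof.
  unfold Cconj; simpl. rewrite Ropp_0. reflexivity.
Qed.

Lemma RtoC_Re (z : C) : Im z = 0 -> RtoC (Re z) = z.
Proof.
  destruct z as [x y]. unfold RtoC, Re, Im; simpl. intros ->. reflexivity.
Qed.

Lemma Im_mul_Cexpi_opp_eq0 (z : C) (theta : R) :
  z = (Cconj z * Cexpi (2 * theta))%C -> Im (z * Cexpi (- theta)) = 0.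
Proof.
  intros Hz.
  assert (Hself_conj : Cconj (z * Cexpi (- theta)) = (z * Cexpi (- theta))%C).
  { rewrite Cmult_conj, Cconj_Cexpi, Ropp_involutive.
    rewrite Hz at 2.
    rewrite <- Cmult_assoc, <- Cexpi_add.
    f_equal. f_equal. ring. }
  apply (f_equal Im) in Hself_conj. rewrite im_conj in Hself_conj. lra.
Qed.

Lemma polar_of_Im_mul_Cexpi_opp_eq0 (z : C) (theta : R) :
  Im (z * Cexpi (- theta)) = 0 ->
  z = (RtoC (Re (z * Cexpi (- theta))) * Cexpi theta)%C.
Proof.
  intros Him. rewrite RtoC_Re by exact Him.
  rewrite <- Cmult_assoc, (Cmult_comm (Cexpi (- theta))), Cexpi_opp_r.
  symmetry. apply Cmult_1_r.
Qed.

Lemma continuity_pt_Re_mul_Cexpi (b : R -> C) (phi : R -> R) (t : R) :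
  continuous b t -> continuity_pt phi t ->
  continuity_pt (fun s => Re (b s * Cexpi (phi s))) t.
Proof.
  intros Hb Hphi.
  assert (Hre : continuity_pt (fun s => fst (b s)) t).
  { apply continuity_pt_filterlim, (continuous_comp b fst); [exact Hb |].
    destruct (b t); apply continuous_fst. }
  assert (Him : continuity_pt (fun s => snd (b s)) t).
  { apply continuity_pt_filterlim, (continuous_comp b snd); [exact Hb |].
    destruct (b t); apply continuous_snd. }
  assert (Hcos : continuity_pt (fun s => cos (phi s)) t)
    by (apply (continuity_pt_comp phi cos); [exact Hphi | apply continuity_cos]).
  assert (Hsin : continuity_pt (fun s => sin (phi s)) t)
    by (apply (continuity_pt_comp phi sin); [exact Hphi | apply continuity_sin]).
  unfold Cexpi, Cmult, Re; simpl.
  apply continuity_pt_minus; apply continuity_pt_mult; assumption.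
Qed.

Lemma antiperiodic_has_root (f : R -> R) (T : R) :
  continuity f -> 0 <= T -> (forall t, f (t + T) = - f t) ->
  exists t, f t = 0.
Proof.
  intros Hf HT Hanti.
  destruct (IVT_cor f 0 T Hf HT) as [t [_ Ht]].
  - specialize (Hanti 0). rewrite Rplus_0_l in Hanti. rewrite Hanti. nra.
  - exists t. exact Ht.
Qed.

Lemma commutes_with_Gmat (omega : R) (a c : R -> R) (b : R -> C) (t : R) :
  M2comm (Hmat a c b t) (Gmat omega t) = M2zero ->
  a t = c t /\ b t = Cmult (Cconj (b t)) (Cexpi (- (omega * t))).
Proof.
  unfold M2comm, M2mul, Hmat, Gmat, M2zero, Cexpi; simpl.
  destruct (b t) as [x y]. intros Hcomm. injection Hcomm.
  unfold Cminus, Cplus, Cmult, Copp, Cconj, RtoC; simpl.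
  intros _ H21 _ H11.
  split; [lra | f_equal; lra].
Qed.

Lemma degenerate_spectrum_scalar (l : C) : degenerate_spectrum (mkM2 l 0 0 l).
Proof.
  exists l. intro mu. unfold M2det, M2shift; simpl. ring.
Qed.

Theorem mainTheorem3 (omega : R) (a c : R -> R) (b : R -> C) :
  0 < omega ->
  (forall t, continuous a t) ->
  (forall t, continuous c t) ->
  (forall t, continuous b t) ->
  (forall t, a (t + 2 * PI / omega) = a t) ->
  (forall t, c (t + 2 * PI / omega) = c t) ->
  (forall t, b (t + 2 * PI / omega) = b t) ->
  (forall t, M2comm (Hmat a c b t) (Gmat omega t) = M2zero) ->
  (forall t, a t = c t /\ b t = Cmult (Cconj (b t)) (Cexpi (- (omega * t)))) /\
  (exists t, b t = RtoC 0 /\ degenerate_spectrum (Hmat a c b t)).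
Proof.
  intros Homega _ _ Hb _ _ Pb Hcomm.
  assert (Hrel := fun t => commutes_with_Gmat omega a c b t (Hcomm t)).
  split; [exact Hrel |].
  set (theta := fun t => - (omega * t) / 2).
  assert (Hreal : forall t, Im (b t * Cexpi (- theta t)) = 0).
  { intro t. apply Im_mul_Cexpi_opp_eq0.
    replace (2 * theta t) with (- (omega * t)) by (unfold theta; field).
    apply Hrel. }
  destruct (antiperiodic_has_root (fun t => Re (b t * Cexpi (- theta t))) (2 * PI / omega))
    as [t0 Hroot].
  - intro t. apply continuity_pt_Re_mul_Cexpi; [apply Hb | unfold theta; reg].
  - pose proof PI_RGT_0. apply Rlt_le, Rdiv_lt_0_compat; lra.
  - intro t. rewrite Pb.
    replace (- theta (t + 2 * PI / omega)) with (- theta t + PI)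
      by (unfold theta; field; lra).
    rewrite Cexpi_add_PI. unfold Cmult, Copp, Re; simpl. ring.
  - assert (Hb0 : b t0 = 0%C).
    { rewrite (polar_of_Im_mul_Cexpi_opp_eq0 (b t0) (theta t0) (Hreal t0)), Hroot.
      apply Cmult_0_l. }
    exists t0. split; [exact Hb0 |].
    unfold Hmat. rewrite Hb0, Cconj_0, (proj1 (Hrel t0)).
    apply degenerate_spectrum_scalar.
Qed.
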